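(* Let $q$ be an odd prime power, $s\ge 1$, and $E,F\subset\mathbb{F}_q^s$. Then \begin{align*} \sum_{j \in \mathbb{F}_q} \nu(j)^2 & \le \frac{(\#E)^2(\#F)^2}{q} + q^{s-1} (\#E)(\#F) + q^{3s} \left|\sigma_{E,F}(0)\right|^2 + q^{3s} \sum_{r \in \mathbb{F}_q^*} \sigma_E(r) \sigma_F(r)\\ & \le \frac{(\#E)^2(\#F)^2}{q} + q^{3s} \sum_{r \in \mathbb{F}_q} \sigma_E(r) \sigma_F(r) + q^{s-1} (\#E)(\#F). \end{align*}
   Context: $\mathbb{F}_q$ is the finite field with $q$ elements ($q$ odd), $\mathbb{F}_q^*=\mathbb{F}_q\setminus\{0\}$. Fix a nontrivial additive character $\psi$ of $\mathbb{F}_q$. For $f:\mathbb{F}_q^s\to\mathbb{C}$, $\hat f(\mathbf{x})=q^{-s}\sum_{\mathbf{m}\in\mathbb{F}_q^s}\psi(-\mathbf{m}\cdot\mathbf{x})f(\mathbf{m})$. Sets are identified with their indicator functions. $|\mathbf{x}|^2=\sum_ix_i^2$. $\nu(j)=\#\{(\mathbf{x},\mathbf{y})\in E\times F: |\mathbf{x}-\mathbf{y}|^2=j\}$. $\sigma_E(r)=\sum_{\mathbf{a}:|\mathbf{a}|^2=r}|\hat E(\mathbf{a})|^2$, similarly $\sigma_F$, and $\sigma_{E,F}(r)=\sum_{\mathbf{m}:|\mathbf{m}|^2=r}\overline{\hat E(\mathbf{m})}\hat F(\mathbf{m})$. *)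

From mathcomp Require Import all_boot all_order all_algebra all_field.
Set Implicit Arguments. Unset Strict Implicit. Unset Printing Implicit Defensive.
Import Order.TTheory GRing.Theory Num.Theory.
Local Open Scope ring_scope.

(* Complex numbers are modelled by algC (values of additive characters of a
   finite field are algebraic). Vectors of F_q^s are row vectors 'rV[K]_s. *)

Definition dotv (K : finFieldType) (s : nat) (x y : 'rV[K]_s) : K :=
  \sum_(i < s) x 0 i * y 0 i.

Definition normsq (K : finFieldType) (s : nat) (x : 'rV[K]_s) : K := dotv x x.

Definition nontriv_add_char (K : finFieldType) (psi : K -> algC) : Prop :=
  [/\ psi 0 = 1, (forall x y, psi (x + y) = psi x * psi y) & exists x, psi x != 1].

Definition ind (K : finFieldType) (s : nat) (E : {set 'rV[K]_s}) (m : 'rV[K]_s) : algC :=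
  (m \in E)%:R.

Definition fourier (K : finFieldType) (s : nat) (psi : K -> algC)
  (f : 'rV[K]_s -> algC) (x : 'rV[K]_s) : algC :=
  (#|K|%:R ^- s) * \sum_(m : 'rV[K]_s) psi (- dotv m x) * f m.

Definition nu (K : finFieldType) (s : nat) (E F : {set 'rV[K]_s}) (j : K) : nat :=
  #|[set p : 'rV[K]_s * 'rV[K]_s |
      [&& p.1 \in E, p.2 \in F & normsq (p.1 - p.2) == j]]|.

Definition sigma (K : finFieldType) (s : nat) (psi : K -> algC)
  (E : {set 'rV[K]_s}) (r : K) : algC :=
  \sum_(a : 'rV[K]_s | normsq a == r) `|fourier psi (ind E) a| ^+ 2.

Definition sigmaEF (K : finFieldType) (s : nat) (psi : K -> algC)
  (E F : {set 'rV[K]_s}) (r : K) : algC :=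
  \sum_(m : 'rV[K]_s | normsq m == r)
     (fourier psi (ind E) m)^* * fourier psi (ind F) m.

From mathcomp Require Import all_boot all_order all_algebra all_field.
From mathcomp Require Import ring.
Import Order.TTheory GRing.Theory Num.Theory.
Set Implicit Arguments. Unset Strict Implicit. Unset Printing Implicit Defensive.
Local Open Scope ring_scope.

(* Expanding the condition |x - y|^2 = j with the character psi gives
   nu(j) = q^-1 sum_t psi(j t) A(t), where A(t) = sum_(x in E, y in F) psi(-t |x - y|^2).
   Parseval in j turns sum_j nu(j)^2 into q^-1 sum_t |A(t)|^2, and A(0) = #E #F.
   For t != 0, Fourier-expanding psi(-t |.|^2) and completing the square writes
   A(t) as q^s times a Gauss sum of modulus q^(s/2) times sum_r psi(r / 4t) sigma_EF(r);
   since t |-> 1/4t permutes the nonzero t, a second Parseval bounds the t != 0 part by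
   q^(3s) sum_r |sigma_EF(r)|^2, and Cauchy-Schwarz gives |sigma_EF(r)|^2 <= sigma_E(r) sigma_F(r). *)

Section DotProduct.
Variables (K : finFieldType) (s : nat).
Implicit Types x y z : 'rV[K]_s.

Lemma dotvC x y : dotv x y = dotv y x.
Proof. by apply: eq_bigr => i _; rewrite mulrC. Qed.

Lemma dotvDr x y z : dotv x (y + z) = dotv x y + dotv x z.
Proof. by rewrite /dotv -big_split; apply: eq_bigr => i _; rewrite mxE mulrDr. Qed.

Lemma dotvDl x y z : dotv (y + z) x = dotv y x + dotv z x.
Proof. by rewrite dotvC dotvDr ![dotv x _]dotvC. Qed.

Lemma dotvBr x y z : dotv x (y - z) = dotv x y - dotv x z.
Proof.
rewrite dotvDr /dotv -sumrN; congr (_ + _).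
by apply: eq_bigr => i _; rewrite mxE mulrN.
Qed.

Lemma dotvZr a x y : dotv x (a *: y) = a * dotv x y.
Proof. by rewrite /dotv mulr_sumr; apply: eq_bigr => i _; rewrite mxE mulrCA. Qed.

Lemma dotvZl a x y : dotv (a *: y) x = a * dotv y x.
Proof. by rewrite dotvC dotvZr dotvC. Qed.

Lemma dotv0l x : dotv 0 x = 0.
Proof. by rewrite /dotv big1 // => i _; rewrite mxE mul0r. Qed.

Lemma dotv_delta x i : dotv x (delta_mx 0 i) = x 0 i.
Proof.
rewrite /dotv (bigD1 i) //= big1 ?addr0 => [|j ji]; first by rewrite mxE !eqxx mulr1.
by rewrite mxE (negbTE ji) andbF mulr0.
Qed.

Lemma normsqD x y : normsq (x + y) = normsq x + 2 * dotv x y + normsq y.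
Proof. by rewrite /normsq dotvDr !dotvDl (dotvC y x); ring. Qed.

Lemma normsqZ a x : normsq (a *: x) = a ^+ 2 * normsq x.
Proof. by rewrite /normsq dotvZr dotvZl mulrA expr2. Qed.

End DotProduct.

Lemma oddcard_two_neq0 (K : finFieldType) : odd #|K| -> (2 : K) != 0.
Proof.
move=> oK; apply/eqP => two0.
have char2 : 2 \in [pchar K] by rewrite inE /= two0 eqxx.
have := card_pprimeChar char2; rewrite -[#|pPrimeCharType _|]/#|K| => cardK.
move: oK (finNzRing_gt1 K); rewrite cardK oddX orbF.
by case: logn.
Qed.

Lemma inv4K (K : fieldType) : (2 : K) != 0 -> involutive (fun t : K => (2 * 2 * t)^-1).
Proof.
by move=> two t; rewrite invfM invrK mulrA mulVf ?mul1r // mulf_neq0.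
Qed.

Lemma card_neq0 (T : finType) (x : T) : (#|T|%:R : algC) != 0.
Proof. by rewrite pnatr_eq0 -lt0n; apply/card_gt0P; exists x. Qed.

Lemma normCK_sum (I : finType) (P : pred I) (X : I -> algC) :
  `|\sum_(i | P i) X i| ^+ 2 = \sum_(i | P i) \sum_(k | P k) X i * (X k)^*.
Proof. by rewrite normCK rmorph_sum mulr_suml; apply: eq_bigr => i _; rewrite mulr_sumr. Qed.

Lemma cauchy_schwarzC (I : finType) (P : pred I) (a b : I -> algC) :
  `|\sum_(i | P i) (a i)^* * b i| ^+ 2 <=
    (\sum_(i | P i) `|a i| ^+ 2) * (\sum_(i | P i) `|b i| ^+ 2).
Proof.
set A := \sum_(i | P i) `|a i| ^+ 2; set B := \sum_(i | P i) `|b i| ^+ 2.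
set C := \sum_(i | P i) (a i)^* * b i.
have A_ge0 : 0 <= A by apply: sumr_ge0 => i _; apply: exprn_ge0.
have [A0|A_neq0] := eqVneq A 0.
  have a0 i : P i -> a i = 0.
    move=> Pi; have := psumr_eq0P (fun i _ => exprn_ge0 2 (normr_ge0 (a i))) A0 Pi.
    by move/eqP; rewrite expf_eq0 /= normr_eq0 => /eqP.
  have -> : C = 0 by rewrite /C big1 // => i Pi; rewrite a0 // rmorph0 mul0r.
  by rewrite A0 normr0 expr0n mul0r.
have A_gt0 : 0 < A by rewrite lt_def A_neq0.
have conjA : A^* = A by rewrite geC0_conj.
(* Lagrange's identity: the defect A B - |C|^2 is A^-1 times a sum of squares. *)
have lagrange : \sum_(i | P i) `|A * b i - C * a i| ^+ 2 = A * (A * B - `|C| ^+ 2).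
  transitivity (\sum_(i | P i) (A * A * `|b i| ^+ 2 + (- (A * C^*)) * ((a i)^* * b i)
       + (- (A * C)) * ((a i)^* * b i)^* + C * C^* * `|a i| ^+ 2)).
    by apply: eq_bigr => i _; rewrite !normCK !rmorphB !rmorphM /= conjA !conjCK; ring.
  rewrite !big_split /= -!mulr_sumr -rmorph_sum /= -/A -/B -/C normCK; ring.
have : 0 <= A * (A * B - `|C| ^+ 2).
  by rewrite -lagrange; apply: sumr_ge0 => i _; apply: exprn_ge0.
by rewrite pmulr_rge0 // subr_ge0.
Qed.

Section AdditiveCharacter.
Variables (K : finFieldType) (psi : K -> algC).
Hypothesis psi0 : psi 0 = 1.
Hypothesis psiD : forall x y, psi (x + y) = psi x * psi y.

Let q : algC := #|K|%:R.

Lemma psiNK x : psi (- x) * psi x = 1.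
Proof. by rewrite -psiD addNr psi0. Qed.

Lemma psiMn x n : psi (x *+ n) = psi x ^+ n.
Proof. by elim: n => [|n IHn]; rewrite ?mulr0n ?psi0 // mulrS psiD IHn exprS. Qed.

Lemma norm_psi x : `|psi x| = 1.
Proof.
have [p p_pr charKp] := finPcharP K.
have psi_p : psi x ^+ p = 1 by rewrite -psiMn (mulrn_pchar charKp) psi0.
apply/eqP; rewrite -(pexpr_eq1 (prime_gt0 p_pr)) //.
by rewrite -normrX psi_p normr1.
Qed.

Lemma conj_psi x : (psi x)^* = psi (- x).
Proof.
have psi_neq0 : psi x != 0 by apply: contra_eq_neq (psiNK x) => ->; rewrite mulr0 eq_sym oner_neq0.
by apply: (mulIf psi_neq0); rewrite psiNK mulrC -normCK norm_psi expr1n.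
Qed.

(* Translating the summation variable by [z0] multiplies the sum by [psi (L z0)]. *)
Lemma sum_psi_additive_eq0 (T : finZmodType) (L : T -> K) (z0 : T) :
  (forall a b, L (a + b) = L a + L b) -> psi (L z0) != 1 -> \sum_z psi (L z) = 0.
Proof.
move=> LD psiLz0.
have shift : \sum_z psi (L z) = (\sum_z psi (L z)) * psi (L z0).
  rewrite mulr_suml (reindex_inj (addIr z0)) /=.
  by apply: eq_bigr => z _; rewrite LD psiD.
have : (\sum_z psi (L z)) * (1 - psi (L z0)) = 0 by rewrite mulrBr mulr1 -shift subrr.
by move/eqP; rewrite mulf_eq0 subr_eq0 [1 == _]eq_sym (negbTE psiLz0) orbF => /eqP.
Qed.

Hypothesis psi_nontriv : exists x, psi x != 1.

Lemma sum_psiM c : \sum_x psi (c * x) = if c == 0 then q else 0.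
Proof.
have [x0 psi_x0] := psi_nontriv.
have [->|c0] := eqVneq c 0.
  by rewrite /q -sum1_card natr_sum; apply: eq_bigr => x _; rewrite mul0r psi0.
apply: (@sum_psi_additive_eq0 _ (fun x => c * x) (c^-1 * x0)) => [a b|].
  exact: mulrDr.
by rewrite mulrA mulfV // mul1r.
Qed.

Lemma sum_psi_dotv s (a : 'rV[K]_s) :
  \sum_z psi (dotv a z) = if a == 0 then q ^+ s else 0.
Proof.
have [x0 psi_x0] := psi_nontriv.
have [->|a0] := eqVneq a 0.
  have -> : q ^+ s = #|{: 'rV[K]_s}|%:R by rewrite card_mx mul1n natrX.
  rewrite -sum1_card natr_sum.
  by apply: eq_bigr => x _; rewrite dotv0l psi0.
have [i ai0] : exists i, a 0 i != 0.
  apply/existsP; apply: contra_neqT a0 => /existsPn a_eq0.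
  by apply/rowP => i; move/negPn/eqP: (a_eq0 i); rewrite mxE.
apply: (@sum_psi_additive_eq0 _ (dotv a) ((x0 / a 0 i) *: delta_mx 0 i)).
  exact: dotvDr.
by rewrite dotvZr dotv_delta divfK.
Qed.

Lemma parseval_psi (c : K -> algC) :
  \sum_j `|\sum_t psi (j * t) * c t| ^+ 2 = q * \sum_t `|c t| ^+ 2.
Proof.
under eq_bigr => j _ do rewrite normCK_sum.
rewrite exchange_big mulr_sumr; apply: eq_bigr => t _ /=.
rewrite exchange_big /=.
have orth t' : \sum_j psi (j * t) * c t * (psi (j * t') * c t')^* =
    c t * (c t')^* * (if t - t' == 0 then q else 0).
  rewrite -sum_psiM mulr_sumr; apply: eq_bigr => j _.
  rewrite rmorphM /= conj_psi mulrBl -mulrN psiD (mulrC t) (mulrC t') mulrN; ring.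
under eq_bigr => t' _ do rewrite orth.
rewrite (bigD1 t) //= subrr eqxx big1 ?addr0 => [|t' t't]; first by rewrite normCK mulrC.
by rewrite subr_eq0 eq_sym (negbTE t't) mulr0.
Qed.

Lemma fourier_inversion s (g : 'rV[K]_s -> algC) z :
  g z = q ^- s * \sum_m (\sum_w g w * psi (- dotv m w)) * psi (dotv m z).
Proof.
have expand m : (\sum_w g w * psi (- dotv m w)) * psi (dotv m z) =
    \sum_w g w * psi (dotv (z - w) m).
  rewrite mulr_suml; apply: eq_bigr => w _.
  by rewrite -mulrA -psiD addrC -dotvBr dotvC.
under eq_bigr => m _ do rewrite expand.
rewrite exchange_big /=.
under eq_bigr => w _ do rewrite -mulr_sumr sum_psi_dotv.
rewrite (bigD1 z) //= subrr eqxx big1 ?addr0 => [|w wz]; last first.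
  by rewrite subr_eq0 eq_sym (negbTE wz) mulr0.
by rewrite mulrCA mulVf ?mulr1 // expf_neq0 // (card_neq0 0).
Qed.

End AdditiveCharacter.

Lemma sum_ind (K : finFieldType) s (E : {set 'rV[K]_s}) : \sum_x ind E x = #|E|%:R.
Proof.
rewrite -sum1_card natr_sum [RHS]big_mkcond /=.
by apply: eq_bigr => x _; rewrite /ind; case: (x \in E).
Qed.

Section GaussSum.
Variables (K : finFieldType) (psi : K -> algC) (s : nat).
Hypothesis psi0 : psi 0 = 1.
Hypothesis psiD : forall x y, psi (x + y) = psi x * psi y.
Hypothesis psi_nontriv : exists x, psi x != 1.
Hypothesis two_neq0 : (2 : K) != 0.

Let q : algC := #|K|%:R.
Implicit Types (m w z : 'rV[K]_s).

Definition gauss_sum (b : K) : algC := \sum_(w : 'rV[K]_s) psi (b * normsq w).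

(* Completing the square: b |w|^2 - m.w = b |w + m/(2b)|^2 - |m|^2/(4b). *)
Lemma gauss_sum_shift b m : b != 0 ->
  \sum_w psi (b * normsq w) * psi (- dotv m w) =
    psi (- (2 * 2 * b)^-1 * normsq m) * gauss_sum b.
Proof.
move=> b0; rewrite mulr_sumr (reindex_inj (addIr ((2 * b)^-1 *: m))) /=.
apply: eq_bigr => w _; rewrite -!psiD; congr psi.
rewrite normsqD normsqZ dotvDr !dotvZr (dotvC m w) /normsq.
by field; rewrite b0 two_neq0 -[4]/(2 * 2)%:R natrM mulf_neq0.
Qed.

Lemma norm_gauss_sum b : b != 0 -> `|gauss_sum b| ^+ 2 = q ^+ s.
Proof.
move=> b0; rewrite normCK /gauss_sum rmorph_sum /= mulr_sumr.
have shift w : gauss_sum b * (psi (b * normsq w))^* =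
    \sum_z psi (b * normsq z) * psi (dotv ((2 * b) *: z) w).
  rewrite conj_psi // mulr_suml (reindex_inj (addIr w)) /=.
  by apply: eq_bigr => z _; rewrite -!psiD; congr psi; rewrite normsqD dotvZl; ring.
rewrite (eq_bigr _ (fun w _ => shift w)) exchange_big /=.
under eq_bigr => z _ do rewrite -mulr_sumr sum_psi_dotv //.
rewrite (bigD1 0) //= scaler0 eqxx big1 ?addr0 => [|z z0]; last first.
  by rewrite scaler_eq0 mulf_eq0 (negbTE two_neq0) (negbTE b0) (negbTE z0) mulr0.
by rewrite /normsq dotv0l mulr0 psi0 mul1r.
Qed.

End GaussSum.

Section DistanceCounting.
Variables (K : finFieldType) (psi : K -> algC) (s : nat) (E F : {set 'rV[K]_s}).
Hypothesis psi0 : psi 0 = 1.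
Hypothesis psiD : forall x y, psi (x + y) = psi x * psi y.
Hypothesis psi_nontriv : exists x, psi x != 1.

Let q : algC := #|K|%:R.
Let q_neq0 : q != 0 := card_neq0 0.
Implicit Types (m x y : 'rV[K]_s).

Definition nu_transform (t : K) : algC :=
  \sum_x \sum_y ind E x * ind F y * psi (- (normsq (x - y) * t)).

Definition sigma_transform (u : K) : algC := \sum_r psi (u * r) * sigmaEF psi E F r.

Lemma nu_transform0 : nu_transform 0 = #|E|%:R * #|F|%:R.
Proof.
rewrite /nu_transform -!sum_ind mulr_suml; apply: eq_bigr => x _.
by rewrite mulr_sumr; apply: eq_bigr => y _; rewrite mulr0 oppr0 psi0 mulr1.
Qed.

Lemma nu_char_expansion j :
  (nu E F j)%:R = q^-1 * \sum_t psi (j * t) * nu_transform t.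
Proof.
have nuE : (nu E F j)%:R = \sum_x \sum_y ind E x * ind F y * (normsq (x - y) == j)%:R.
  rewrite /nu -sum1_card natr_sum big_mkcond pair_big /=.
  apply: eq_bigr => -[x y] _; rewrite inE /ind /=.
  by case: (x \in E); case: (y \in F); case: (_ == j); rewrite /= ?mul1r ?mulr0 ?mul0r.
have indicator x y : ((normsq (x - y) == j)%:R : algC) =
    q^-1 * \sum_t psi (j * t) * psi (- (normsq (x - y) * t)).
  have -> : \sum_t psi (j * t) * psi (- (normsq (x - y) * t)) =
      \sum_t psi ((j - normsq (x - y)) * t).
    by apply: eq_bigr => t _; rewrite mulrBl -mulNr psiD mulNr.
  rewrite sum_psiM // subr_eq0 eq_sym.
  by case: (_ == _); rewrite ?mulr0 ?mulVf.
transitivity (\sum_x \sum_y \sum_t q^-1 * psi (j * t) *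
    (ind E x * ind F y * psi (- (normsq (x - y) * t)))).
  rewrite nuE; apply: eq_bigr => x _; apply: eq_bigr => y _.
  by rewrite indicator !mulr_sumr; apply: eq_bigr => t _; ring.
under eq_bigr => x _ do rewrite exchange_big /=.
rewrite exchange_big /= mulr_sumr; apply: eq_bigr => t _.
by rewrite mulrA /nu_transform mulr_sumr; apply: eq_bigr => x _; rewrite mulr_sumr.
Qed.

Lemma sum_ind_psiN m : \sum_y ind F y * psi (- dotv m y) = q ^+ s * fourier psi (ind F) m.
Proof.
rewrite /fourier mulrA mulfV ?expf_neq0 // mul1r.
by apply: eq_bigr => y _; rewrite mulrC dotvC.
Qed.

Lemma sum_ind_psi m : \sum_x ind E x * psi (dotv m x) = q ^+ s * (fourier psi (ind E) m)^*.
Proof.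
rewrite /fourier rmorphM rmorph_sum /= fmorphV rmorphXn /= conjC_nat mulrA.
rewrite mulfV ?expf_neq0 // mul1r; apply: eq_bigr => x _.
by rewrite rmorphM /= /ind conjC_nat conj_psi // opprK dotvC mulrC.
Qed.

Hypothesis two_neq0 : (2 : K) != 0.

Lemma nu_transform_sigma t : t != 0 ->
  nu_transform t = q ^+ s * gauss_sum psi s (- t) * sigma_transform (2 * 2 * t)^-1.
Proof.
move=> t0; set G := gauss_sum psi s (- t).
have u_def : - (2 * 2 * - t)^-1 = (2 * 2 * t)^-1 by rewrite mulrN invrN opprK.
have expand x y : ind E x * ind F y * psi (- (normsq (x - y) * t)) =
    \sum_m q ^- s * G * psi ((2 * 2 * t)^-1 * normsq m) *
      ((ind E x * psi (dotv m x)) * (ind F y * psi (- dotv m y))).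
  rewrite -mulrN [_ * - t]mulrC.
  rewrite (fourier_inversion psi0 psiD psi_nontriv (fun z => psi (- t * normsq z)) (x - y)).
  rewrite mulrA mulr_sumr; apply: eq_bigr => m _.
  rewrite gauss_sum_shift ?oppr_eq0 // -/G u_def dotvBr psiD; ring.
clearbody G.
transitivity (\sum_m q ^- s * G * psi ((2 * 2 * t)^-1 * normsq m) *
    ((\sum_x ind E x * psi (dotv m x)) * (\sum_y ind F y * psi (- dotv m y)))).
  rewrite /nu_transform; under eq_bigr => x _ do under eq_bigr => y _ do rewrite expand.
  under eq_bigr => x _ do rewrite exchange_big /=.
  rewrite exchange_big /=; apply: eq_bigr => m _.
  rewrite big_distrlr [in RHS]mulr_sumr; apply: eq_bigr => x _.
  by rewrite [in RHS]mulr_sumr.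
under eq_bigr => m _ do rewrite sum_ind_psi sum_ind_psiN.
rewrite (partition_big (fun m => normsq m) xpredT) //= [RHS]mulr_sumr.
apply: eq_bigr => r _; rewrite /sigmaEF !mulr_sumr.
by apply: eq_bigr => m /eqP <-; field; rewrite expf_neq0.
Qed.

Lemma sum_nu_sqr :
  \sum_j ((nu E F j)%:R : algC) ^+ 2 = q^-1 * \sum_t `|nu_transform t| ^+ 2.
Proof.
have nu_sqr j : ((nu E F j)%:R : algC) ^+ 2 =
    q^-1 ^+ 2 * `|\sum_t psi (j * t) * nu_transform t| ^+ 2.
  by rewrite -normr_nat nu_char_expansion normrM exprMn normfV normr_nat.
rewrite (eq_bigr _ (fun j _ => nu_sqr j)) -mulr_sumr parseval_psi //.
by rewrite mulrA expr2 divfK.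
Qed.

Lemma norm_nu_transform t : t != 0 ->
  `|nu_transform t| ^+ 2 = q ^+ (3 * s) * `|sigma_transform (2 * 2 * t)^-1| ^+ 2.
Proof.
move=> t0; rewrite nu_transform_sigma // !normrM !exprMn.
rewrite norm_gauss_sum ?oppr_eq0 // normrX normr_nat -exprM -exprD.
by rewrite (mulnC 3) -mulnSr.
Qed.

(* [t |-> (4t)^-1] permutes the nonzero elements, so Parseval applies once [u = 0] is added back. *)
Lemma sum_norm_sigma_transform_le :
  \sum_(t | t != 0) `|sigma_transform (2 * 2 * t)^-1| ^+ 2 <=
    q * \sum_r `|sigmaEF psi E F r| ^+ 2.
Proof.
rewrite -(parseval_psi psi0 psiD psi_nontriv).
have -> : \sum_u `|sigma_transform u| ^+ 2 = \sum_t `|sigma_transform (2 * 2 * t)^-1| ^+ 2.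
  exact: (reindex_inj (inv_inj (inv4K two_neq0))).
by rewrite [X in _ <= X](bigD1 0) //= lerDr exprn_ge0.
Qed.

Lemma sum_nu_sqr_le :
  \sum_j ((nu E F j)%:R : algC) ^+ 2 <=
    #|E|%:R ^+ 2 * #|F|%:R ^+ 2 / q + q ^+ (3 * s) * \sum_r `|sigmaEF psi E F r| ^+ 2.
Proof.
have q_gt0 : 0 < q by rewrite lt_def q_neq0 ler0n.
rewrite sum_nu_sqr (bigD1 0) //= nu_transform0 normrM !normr_nat.
rewrite (eq_bigr _ norm_nu_transform) -mulr_sumr mulrDr exprMn mulrC.
apply: lerD => //; rewrite mulrCA ler_wpM2l ?exprn_ge0 ?ler0n //.
by rewrite ler_pdivrMl // sum_norm_sigma_transform_le.
Qed.

End DistanceCounting.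

Theorem lemma7 (K : finFieldType) (s : nat) (psi : K -> algC)
  (E F : {set 'rV[K]_s}) :
  odd #|K| -> (1 <= s)%N -> nontriv_add_char psi ->
  let q : algC := #|K|%:R in
  let nE : algC := #|E|%:R in
  let nF : algC := #|F|%:R in
  let LHS := \sum_(j : K) ((nu E F j)%:R : algC) ^+ 2 in
  let mid := nE ^+ 2 * nF ^+ 2 / q + q ^+ (s - 1) * nE * nF
             + q ^+ (3 * s) * `|sigmaEF psi E F 0| ^+ 2
             + q ^+ (3 * s) * \sum_(r : K | r != 0) sigma psi E r * sigma psi F r in
  let rhs := nE ^+ 2 * nF ^+ 2 / q
             + q ^+ (3 * s) * \sum_(r : K) sigma psi E r * sigma psi F r
             + q ^+ (s - 1) * nE * nF in
  LHS <= mid /\ mid <= rhs.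
Proof.
move=> oddK _ [psi0 psiD psi_nontriv] q nE nF LHS mid rhs.
have sigmaEF_le r : `|sigmaEF psi E F r| ^+ 2 <= sigma psi E r * sigma psi F r.
  exact: cauchy_schwarzC.
have q3s_ge0 : 0 <= q ^+ (3 * s) by rewrite exprn_ge0 ?ler0n.
have slack_ge0 : 0 <= q ^+ (s - 1) * nE * nF by rewrite !mulr_ge0 ?exprn_ge0 ?ler0n.
split.
  apply: le_trans (sum_nu_sqr_le E F psi0 psiD psi_nontriv (oddcard_two_neq0 oddK)) _.
  rewrite (bigD1 0) //= mulrDr /mid -!addrA lerD // ler_wpDl // lerD //.
  by rewrite ler_wpM2l // ler_sum.
rewrite -subr_ge0.
have -> : rhs - mid =
    q ^+ (3 * s) * (sigma psi E 0 * sigma psi F 0 - `|sigmaEF psi E F 0| ^+ 2).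
  by rewrite /rhs /mid (bigD1 0) //=; ring.
by rewrite mulr_ge0 // subr_ge0.
Qed.
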